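(* Let $\mathcal{C}=\{C_1,\ldots,C_r\}$ be a partition of $C$ and let $F$ be a joint distribution of the component lifetimes without ties. Suppose there exists a function $\gamma\colon\prod_{j=1}^r\{0,\ldots,n_j\}\to\mathbb{R}$ with the following property. For every semicoherent structure $\phi$ admitting a modular decomposition $\phi(\mathbf{x})=\psi(\chi_1(\mathbf{x}^{C_1}),\ldots,\chi_r(\mathbf{x}^{C_r}))$, with $\chi_j\colon\{0,1\}^{C_j}\to\{0,1\}$ and $\psi\colon\{0,1\}^r\to\{0,1\}$ semicoherent, and for every $0\le k\le n$, $$\overline{P}_{n-k}=\sum_{\mathbf{a}\in\mathcal{T}_k}\gamma(\mathbf{a})\,\widehat\psi\big(\overline{P}_{1,n_1-a_1},\ldots,\overline{P}_{r,n_r-a_r}\big).$$ Then the relative quality function $q$ associated with $F$ is $\mathcal{C}$-decomposable.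
   Context: Consider components $C=[n]$ with random lifetimes $T_1,\ldots,T_n$ with joint distribution $F$ having no ties. Subsets are identified with Boolean vectors. A structure $\phi\colon\{0,1\}^m\to\{0,1\}$ is semicoherent if it is nondecreasing in each variable, $\phi(\mathbf{0})=0$ and $\phi(\mathbf{1})=1$. The relative quality function is $q(A)=\Pr(\max_{i\notin A}T_i<\min_{i\in A}T_i)$, with $q(\varnothing)=q([n])=1$. For a partition $\mathcal{C}=\{C_1,\ldots,C_r\}$ of $C$ into nonempty blocks, write $n_j=|C_j|$, $A_j=A\cap C_j$, $\mathbf{x}^{C_j}=(x_i)_{i\in C_j}$, and $q^{C_j}(A)=\Pr(\max_{i\in C_j\setminus A}T_i<\min_{i\in A}T_i)$ for $A\subseteq C_j$. The function $q$ is $\mathcal{C}$-decomposable if there is $\tilde c\colon\prod_j\{0,\ldots,n_j\}\to\mathbb{R}$ with $q(A)=\tilde c(|A_1|,\ldots,|A_r|)\prod_j q^{C_j}(A_j)$ for all $A\subseteq C$. The tail probability signatures are $\overline{P}_k=\sum_{|A|=n-k}q(A)\phi(A)$ for $(C,\phi)$ and $\overline{P}_{j,k}=\sum_{A\subseteq C_j,|A|=n_j-k}q^{C_j}(A)\chi_j(A)$ for $(C_j,\chi_j)$. Let $\mathcal{T}_k=\{\mathbf{a}\in\mathbb{N}^r:0\le a_j\le n_j,\ \sum_j a_j=k\}$. The multilinear extension is $\widehat\psi(\mathbf{z})=\sum_{B\subseteq[r]}\psi(B)\prod_{j\in B}z_j\prod_{j\notin B}(1-z_j)$. *)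

From HB Require Import structures.
From mathcomp Require Import all_boot all_order all_algebra all_fingroup.
Set Implicit Arguments. Unset Strict Implicit. Unset Printing Implicit Defensive.
Import Order.TTheory GRing.Theory Num.Theory.
Local Open Scope ring_scope.

(* A joint lifetime distribution without ties is
   represented by the law of the (a.s. well-defined) failure ordering:
   a probability mass function p on permutations s : {perm 'I_n}, where
   s i is the rank of component i in the failure order (T_i < T_j iff
   s i < s j). All the quantities in the statement depend on F only
   through this law. *)

Definition is_pmf (R : realFieldType) (n : nat) (p : {perm 'I_n} -> R) :=
  (forall s, 0 <= p s) /\ \sum_(s : {perm 'I_n}) p s = 1.

(* relative quality function q(A) = Pr(max_{i notin A} T_i < min_{i in A} T_i) *)
Definition qrel (R : realFieldType) (n : nat) (p : {perm 'I_n} -> R)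
  (A : {set 'I_n}) : R :=
  \sum_(s : {perm 'I_n})
     p s * (([forall i, forall k, ((i \notin A) && (k \in A)) ==> (s i < s k)%N]
            : bool)%:R).

Definition block (n r : nat) (blk : 'I_n -> 'I_r) (j : 'I_r) : {set 'I_n} :=
  [set i | blk i == j].

Definition qblock (R : realFieldType) (n r : nat) (p : {perm 'I_n} -> R)
  (blk : 'I_n -> 'I_r) (j : 'I_r) (A : {set 'I_n}) : R :=
  \sum_(s : {perm 'I_n})
     p s * (([forall i, forall k,
               ((i \in block blk j :\: A) && (k \in A)) ==> (s i < s k)%N]
            : bool)%:R).

Definition semicoherent_on (T : finType) (U : {set T}) (f : {set T} -> bool) :=
  [/\ forall A B : {set T}, A \subset B -> B \subset U -> f A -> f B,
      f set0 = false & f U = true].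

Definition Pbar (R : realFieldType) (n : nat) (p : {perm 'I_n} -> R)
  (phi : {set 'I_n} -> bool) (k : nat) : R :=
  \sum_(A : {set 'I_n} | #|A| == (n - k)%N) qrel p A * (phi A)%:R.

Definition Pbarj (R : realFieldType) (n r : nat) (p : {perm 'I_n} -> R)
  (blk : 'I_n -> 'I_r) (j : 'I_r) (chi : {set 'I_n} -> bool) (k : nat) : R :=
  \sum_(A : {set 'I_n} | (A \subset block blk j) &&
                         (#|A| == (#|block blk j| - k)%N))
     qblock p blk j A * (chi A)%:R.

Definition mlext (R : realFieldType) (r : nat) (psi : {set 'I_r} -> bool)
  (z : 'I_r -> R) : R :=
  \sum_(B : {set 'I_r})
     (psi B)%:R * (\prod_(j in B) z j) * (\prod_(j in ~: B) (1 - z j)).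

Definition inT (n r : nat) (blk : 'I_n -> 'I_r) (k : nat)
  (a : {ffun 'I_r -> 'I_n.+1}) : bool :=
  [forall j, (a j <= #|block blk j|)%N] && ((\sum_(j < r) (a j : nat))%N == k).

From HB Require Import structures.
From mathcomp Require Import all_boot all_order all_algebra all_fingroup.
From Stdlib Require Import FunctionalExtensionality.
Set Implicit Arguments. Unset Strict Implicit. Unset Printing Implicit Defensive.
Import Order.TTheory GRing.Theory Num.Theory.
Local Open Scope ring_scope.

(* Given A, test the hypothesis on the system whose only path set is A,
   written modularly: the organisation structure is the series system on the
   blocks met by A, and the module on a block C_j is the series system on A_j
   (on C_j itself when A_j is empty).  Its tail signature at |A| is q(A), the
   multilinear extension of a series system is the product of its arguments,
   and the module signatures vanish unless a_j >= |A_j| for every j; as the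
   a_j sum to |A|, only a = (|A_1|, ..., |A_r|) survives, leaving
   q(A) = gamma(|A_1|, ..., |A_r|) * prod_j q^{C_j}(A_j). *)

Lemma card_set_ord (n : nat) (A : {set 'I_n}) : (#|A| <= n)%N.
Proof. by rewrite -[leqRHS]card_ord max_card. Qed.

Lemma card_blocks (n r : nat) (blk : 'I_n -> 'I_r) (A : {set 'I_n}) :
  #|A| = (\sum_(j < r) #|A :&: block blk j|)%N.
Proof.
rewrite -sum1_card (partition_big blk predT) //=.
by apply: eq_bigr => j _; rewrite -sum1_card; apply: eq_bigl => i; rewrite !inE.
Qed.

Lemma eq_of_leq_sum (I : finType) (a b : I -> nat) :
  (forall i, b i <= a i)%N -> (\sum_i a i)%N = (\sum_i b i)%N -> a =1 b.
Proof.
move=> ba sum_ab i.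
have [_ /esym] := leqif_sum (fun i (_ : true) => leqif_eq (ba i)).
by rewrite sum_ab eqxx => /forallP /(_ i) /= /eqP.
Qed.

Definition series (T : finType) (D X : {set T}) : bool := D \subset X.

Lemma series_semicoherent (T : finType) (U D : {set T}) :
  D != set0 -> D \subset U -> semicoherent_on U (series D).
Proof.
move=> D0 DU; split=> //.
- by move=> X Y XY _ DX; apply: subset_trans XY.
- by apply/negbTE; rewrite /series subset0.
Qed.

Lemma mlext_series (R : realFieldType) (r : nat) (S : {set 'I_r})
  (z : 'I_r -> R) :
  mlext (series S) z = \prod_(j in S) z j.
Proof.
(* Expand prod_j (z_j + G_j): as G vanishes on S, only the B containing S
   contribute, and they contribute exactly the terms of the extension. *)
pose G j := if j \in S then 0 else 1 - z j.
have -> : \prod_(j in S) z j = \prod_j (z j + G j).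
  rewrite big_mkcond; apply: eq_bigr => j _; rewrite /G.
  by case: (j \in S); rewrite ?addr0 // addrC subrK.
rewrite bigA_distr /mlext; apply: eq_bigr => B _.
rewrite [RHS](bigID (mem B)) /=.
case: (boolP (S \subset B)) => SB.
  rewrite /series SB mul1r; congr (_ * _); first by apply: eq_bigr => j ->.
  apply: eq_big => [j | j]; rewrite inE // => /negbTE jB.
  by rewrite jB /G (contraFF (subsetP SB j) jB).
have [j jS jB] := subsetPn SB.
rewrite /series (negbTE SB) !mul0r [X in _ * X](bigD1 j) //=.
by rewrite (negbTE jB) /G jS !mul0r mulr0.
Qed.

Lemma Pbar_series (R : realFieldType) (n : nat) (p : {perm 'I_n} -> R)
  (A : {set 'I_n}) :
  Pbar p (series A) (n - #|A|) = qrel p A.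
Proof.
rewrite /Pbar subKn ?card_set_ord //.
rewrite (bigD1 A) //= big1 ?addr0 => [|X /andP[/eqP XA XnA]].
  by rewrite /series subxx mulr1.
have /negbTE-> : ~~ series A X.
  by apply: contra XnA; rewrite /series => AX; rewrite eq_sym eqEcard AX XA leqnn.
by rewrite mulr0.
Qed.

Section BlockSignatures.

Variables (R : realFieldType) (n r : nat) (blk : 'I_n -> 'I_r).
Variables (p : {perm 'I_n} -> R) (j : 'I_r) (D : {set 'I_n}).
Hypothesis D_block : D \subset block blk j.

Lemma Pbarj_series :
  Pbarj p blk j (series D) (#|block blk j| - #|D|) = qblock p blk j D.
Proof.
rewrite /Pbarj subKn ?subset_leq_card //.
rewrite (bigD1 D) /= ?D_block ?eqxx //.
rewrite big1 ?addr0 => [|X /andP[/andP[_ /eqP XD] XnD]].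
  by rewrite /series subxx mulr1.
have /negbTE-> : ~~ series D X.
  by apply: contra XnD; rewrite /series => DX; rewrite eq_sym eqEcard DX XD leqnn.
by rewrite mulr0.
Qed.

Lemma Pbarj_series_lt (a : nat) : (a < #|D|)%N ->
  Pbarj p blk j (series D) (#|block blk j| - a) = 0.
Proof.
move=> aD; have a_block : (a <= #|block blk j|)%N.
  exact: ltnW (leq_trans aD (subset_leq_card D_block)).
rewrite /Pbarj subKn // big1 // => X /andP[_ /eqP Xa].
have /negbTE-> : ~~ series D X.
  by apply/negP => /subset_leq_card; rewrite Xa leqNgt aD.
by rewrite mulr0.
Qed.

End BlockSignatures.

Lemma qrel_set0 (R : realFieldType) (n : nat) (p : {perm 'I_n} -> R) :
  is_pmf p -> qrel p set0 = 1.
Proof.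
case=> _ <-; apply: eq_bigr => s _.
suff -> : [forall i, forall k, ((i \notin set0) && (k \in set0)) ==> (s i < s k)%N].
  by rewrite mulr1.
by apply/forallP => i; apply/forallP => k; rewrite !in_set0 andbF.
Qed.

Lemma qblock_set0 (R : realFieldType) (n r : nat) (p : {perm 'I_n} -> R)
  (blk : 'I_n -> 'I_r) (j : 'I_r) :
  is_pmf p -> qblock p blk j set0 = 1.
Proof.
case=> _ <-; apply: eq_bigr => s _.
suff -> : [forall i, forall k,
            ((i \in block blk j :\: set0) && (k \in set0)) ==> (s i < s k)%N].
  by rewrite mulr1.
by apply/forallP => i; apply/forallP => k; rewrite !in_set0 andbF.
Qed.

Section TestSystem.

Variables (R : realFieldType) (n r : nat) (blk : 'I_n -> 'I_r).
Variables (p : {perm 'I_n} -> R) (A : {set 'I_n}).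

Definition met_blocks : {set 'I_r} := [set j | A :&: block blk j != set0].

Definition test_path (j : 'I_r) : {set 'I_n} :=
  if j \in met_blocks then A :&: block blk j else block blk j.

Lemma met_blocks_neq0 : A != set0 -> met_blocks != set0.
Proof.
case/set0Pn=> i iA; apply/set0Pn; exists (blk i).
by rewrite inE; apply/set0Pn; exists i; rewrite !inE iA /=.
Qed.

Lemma test_path_semicoherent (j : 'I_r) : block blk j != set0 ->
  semicoherent_on (block blk j) (series (test_path j)).
Proof.
rewrite /test_path; case: ifP => [|_ Cj0]; last exact: series_semicoherent.
by rewrite inE => Aj0 _; apply: series_semicoherent; rewrite ?subsetIr.
Qed.

Lemma series_test_system :
  (fun X => series met_blocks [set j | series (test_path j) (X :&: block blk j)])
  = series A.
Proof.
apply: functional_extensionality => X; apply/subsetP/subsetP => [sub i iA|AX j].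
  have iS : blk i \in met_blocks.
    by rewrite inE; apply/set0Pn; exists i; rewrite !inE iA /=.
  have := sub _ iS; rewrite inE /test_path iS => /subsetP/(_ i).
  by rewrite !inE iA eqxx => /(_ isT) /andP[].
by move=> jS; rewrite inE /test_path jS; apply: setSI; apply/subsetP.
Qed.

Hypothesis pmf : is_pmf p.

Lemma prod_met_blocks :
  \prod_(j in met_blocks) qblock p blk j (A :&: block blk j) =
  \prod_(j < r) qblock p blk j (A :&: block blk j).
Proof.
rewrite [RHS](bigID (mem met_blocks)) /= [X in _ = _ * X]big1 ?mulr1 // => j.
by rewrite inE negbK => /eqP ->; apply: qblock_set0.
Qed.

Lemma test_system_signature (g : ('I_r -> nat) -> R) :
  \sum_(a : {ffun 'I_r -> 'I_n.+1} | inT blk #|A| a)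
     g (fun j => (a j : nat)) *
     mlext (series met_blocks)
       (fun j => Pbarj p blk j (series (test_path j)) (#|block blk j| - a j))
  = g (fun j => #|A :&: block blk j|) *
    \prod_(j < r) qblock p blk j (A :&: block blk j).
Proof.
have A_blockE j : (#|A :&: block blk j| < n.+1)%N.
  by rewrite ltnS (leq_trans (subset_leq_card (subsetIl _ _)) (card_set_ord A)).
pose a0 : {ffun 'I_r -> 'I_n.+1} := [ffun j => inord #|A :&: block blk j|].
have a0E j : (a0 j : nat) = #|A :&: block blk j| by rewrite ffunE inordK.
have a0T : inT blk #|A| a0.
  apply/andP; split; first by apply/forallP => j; rewrite a0E subset_leq_card ?subsetIr.
  by apply/eqP; rewrite (card_blocks blk); apply: eq_bigr => j _; rewrite a0E.
under eq_bigr => a _ do rewrite mlext_series.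
rewrite (bigD1 a0) //= [X in _ + X]big1 ?addr0 => [|a /andP[aT a_neq]].
  have -> : (fun j => (a0 j : nat)) = (fun j => #|A :&: block blk j|).
    by apply: functional_extensionality => j; rewrite a0E.
  rewrite -prod_met_blocks; congr (_ * _); apply: eq_bigr => j jS.
  by rewrite a0E /test_path jS Pbarj_series ?subsetIr.
have [j lt_aj] : exists j, (a j < #|A :&: block blk j|)%N.
  apply/existsP; apply: contraNT a_neq => /existsPn ge_a.
  case/andP: aT => _ /eqP sum_a; apply/eqP/ffunP => j; apply: val_inj => /=.
  rewrite a0E; apply: (@eq_of_leq_sum _ (fun j => a j) (fun j => #|A :&: block blk j|)) => [i|].
    by rewrite leqNgt ge_a.
  by rewrite sum_a -card_blocks.
have jS : j \in met_blocks by rewrite inE -card_gt0 (leq_ltn_trans _ lt_aj).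
rewrite (bigD1 j) //= /test_path jS Pbarj_series_lt ?subsetIr //.
by rewrite mul0r mulr0.
Qed.

End TestSystem.

Theorem theorem15 (R : realFieldType) (n r : nat) (blk : 'I_n -> 'I_r)
  (p : {perm 'I_n} -> R) :
  (forall j : 'I_r, exists i : 'I_n, blk i = j) ->
  is_pmf p ->
  (exists gamma : ('I_r -> nat) -> R,
     forall (psi : {set 'I_r} -> bool) (chi : 'I_r -> {set 'I_n} -> bool),
       semicoherent_on [set: 'I_r] psi ->
       (forall j, semicoherent_on (block blk j) (chi j)) ->
       let phi := fun A : {set 'I_n} =>
                    psi [set j | chi j (A :&: block blk j)] in
       forall k : nat, (k <= n)%N ->
         Pbar p phi (n - k) =
         \sum_(a : {ffun 'I_r -> 'I_n.+1} | inT blk k a)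
            gamma (fun j => (a j : nat)) *
            mlext psi (fun j => Pbarj p blk j (chi j)
                                  (#|block blk j| - a j)%N)) ->
  exists ctilde : ('I_r -> nat) -> R,
    forall A : {set 'I_n},
      qrel p A = ctilde (fun j => #|A :&: block blk j|) *
                 \prod_(j < r) qblock p blk j (A :&: block blk j).
Proof.
move=> surj pmf [gamma Hgamma].
exists (fun f => if [forall j, f j == 0%N] then 1 else gamma f) => A.
(* No semicoherent system has the empty set as a path set, so A = set0 is
   handled by the value of ctilde at 0. *)
have [->|A0] := eqVneq A set0.
  rewrite qrel_set0 // big1 => [|j _]; last by rewrite set0I qblock_set0.
  by rewrite ifT ?mulr1 //; apply/forallP => j; rewrite set0I cards0.
have -> : [forall j, #|A :&: block blk j| == 0%N] = false.
  apply/negP => /forallP all0; move: A0; rewrite -card_gt0 (card_blocks blk).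
  by rewrite big1 // => j _; apply/eqP/all0.
have blk_neq0 j : block blk j != set0.
  by have [i <-] := surj j; apply/set0Pn; exists i; rewrite inE.
have := Hgamma _ _ (series_semicoherent (met_blocks_neq0 blk A0) (subsetT _))
  (fun j => test_path_semicoherent A (blk_neq0 j)) #|A|.
rewrite /= series_test_system Pbar_series test_system_signature //.
by apply; apply: card_set_ord.
Qed.
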